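(* Let $0\le\lambda<1$ and let $Y_1,Y_2,\ldots$ be independent and identically distributed Poisson random variables with mean $\lambda$, i.e. $\Pr(Y_i=y)=\frac{\lambda^y}{y!}e^{-\lambda}$ for $y=0,1,2,\ldots$. Define the random variable $X$ by $X=0$ if $Y_1=0$, and otherwise $$X=\min\Big\{z\ge 1:\ \sum_{i=1}^{z}Y_i\le z\Big\}.$$ Then $X$ is almost surely finite, with distribution $$\Pr(X=x)=\begin{cases} e^{-\lambda}, & x=0,\\ \lambda e^{-\lambda}, & x=1,\\ \dfrac{(x-1)^{x-2}}{x\,(x-2)!}\lambda^{x}e^{-x\lambda}, & x\ge 2,\end{cases}$$ and its first two moments are $$\mathbb{E}[X]=\frac{\lambda}{1-\lambda}e^{-\lambda},\qquad \mathbb{E}[X^2]=\frac{1-\lambda+\lambda^2}{(1-\lambda)^2}\,\mathbb{E}[X].$$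
   Context: Interpretation (not needed for the statement): time is divided into slots, each containing one coded packet on the redundancy path; $Y_i$ is the number of packets lost in slot $i$ after the last decoding event, with Poisson approximation of mean $\lambda=\epsilon_c+\sum_{i\in\mathcal{P}}\alpha_i\epsilon_i$, where $\epsilon_c$ is the erasure probability of the path carrying coded packets and $\alpha_i$ is the number of information packets sent on path $i$ per coded packet; $X$ is the number of slots between consecutive decoding events. *)

From Stdlib Require Import Reals Lra Lia Arith List.
Import ListNotations.
Open Scope R_scope.

Definition poisson (lam : R) (y : nat) : R := lam ^ y / INR (fact y) * exp (- lam).

Definition weight (lam : R) (ys : list nat) : R :=
  fold_right (fun y acc => poisson lam y * acc) 1 ys.

Fixpoint box (n M : nat) : list (list nat) :=
  match n with
  | O => [[]]
  | S k => flat_map (fun y => map (cons y) (box k M)) (seq 0 (S M))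
  end.

(* Partial sum Y_1 + ... + Y_z of a prefix (list index 0 is Y_1). *)
Definition psum (z : nat) (ys : list nat) : nat := fold_right Nat.add 0%nat (firstn z ys).

(* The event {X = x}, decided from the prefix (Y_1, ..., Y_max(x,1)):
   X = 0 iff Y_1 = 0; for x >= 1, X = x iff Y_1 <> 0,
   sum_{i<=x} Y_i <= x, and sum_{i<=z} Y_i > z for all 1 <= z < x
   (i.e. x is the minimal such z >= 1). *)
Definition Xeqb (x : nat) (ys : list nat) : bool :=
  match x with
  | O => Nat.eqb (nth 0 ys 0%nat) 0
  | S _ =>
      negb (Nat.eqb (nth 0 ys 0%nat) 0)
      && Nat.leb (psum x ys) x
      && forallb (fun z => Nat.ltb z (psum z ys)) (seq 1 (x - 1))
  end.

(* Probability of {X = x} AND {Y_1,...,Y_max(x,1) <= M}; as M -> oo this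
   increases to Pr(X = x) (continuity of measure from below). *)
Definition trunc_prob (lam : R) (x M : nat) : R :=
  fold_right Rplus 0
    (map (fun ys => if Xeqb x ys then weight lam ys else 0)
         (box (Nat.max x 1) M)).

Definition pX (lam : R) (x : nat) : R :=
  match x with
  | O => exp (- lam)
  | S O => lam * exp (- lam)
  | _ => INR (x - 1) ^ (x - 2) / (INR x * INR (fact (x - 2)))
         * lam ^ x * exp (- INR x * lam)
  end.

From Stdlib Require Import Reals Lra Lia Arith List Bool.
From Coquelicot Require Import Coquelicot.
Import ListNotations.
Open Scope R_scope.

(* For x >= 1, X = x exactly when Y_1 >= 1 and the walk c, c + Y_2 - 1, c + Y_2 + Y_3 - 2, ...
   started at c = Y_1 - 1 first reaches 0 after x - 1 steps.  With Poisson steps this first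
   hitting time has the Borel-Tanner law (c/n) (n λ)^(n-c) e^(-n λ) / (n-c)!, which is checked
   against the first-step recursion by means of binomial sums; summing over Y_1 gives the closed
   form of P(X = x), and the truncated probabilities already equal it once M >= x.
   X is finite almost surely by an exponential bound: for θ = 2 - λ one has
   E θ^Y = e^(λ(1-λ)) < θ, so the walk started at c survives N steps with probability at most
   θ^c (E θ^Y / θ)^N.
   Finally P(X = x) = a_x t^x with t = λ e^(-λ), hence Σ_x a_x (λ e^(-λ))^x = 1 - e^(-λ) on
   [0, 1); differentiating this identity once and twice in λ gives E[X] and E[X (X - 1)]. *)

(** * Finite sums *)

Fixpoint sumR (f : nat -> R) (n : nat) : R :=
  match n with O => 0 | S k => sumR f k + f k end.

Lemma sumR_ext (f g : nat -> R) (n : nat) :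
  (forall i, (i < n)%nat -> f i = g i) -> sumR f n = sumR g n.
Proof.
  induction n as [|n IH]; intros Hfg; simpl; auto.
  rewrite IH, (Hfg n); auto with arith.
Qed.

Lemma sumR_plus (f g : nat -> R) (n : nat) :
  sumR (fun i => f i + g i) n = sumR f n + sumR g n.
Proof. induction n; simpl; lra. Qed.

Lemma sumR_minus (f g : nat -> R) (n : nat) :
  sumR (fun i => f i - g i) n = sumR f n - sumR g n.
Proof. induction n; simpl; lra. Qed.

Lemma sumR_scal (c : R) (f : nat -> R) (n : nat) :
  sumR (fun i => c * f i) n = c * sumR f n.
Proof. induction n; simpl; [ring | rewrite IHn; ring]. Qed.

Lemma sumR_const0 (n : nat) : sumR (fun _ => 0) n = 0.
Proof. induction n; simpl; lra. Qed.

Lemma sumR_shift (f : nat -> R) (n : nat) :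
  sumR f (S n) = f O + sumR (fun i => f (S i)) n.
Proof. induction n; simpl in *; lra. Qed.

Lemma sumR_add (f : nat -> R) (n m : nat) :
  sumR f (n + m) = sumR f n + sumR (fun i => f (n + i)%nat) m.
Proof. induction m; simpl; rewrite ?Nat.add_succ_r, ?Nat.add_0_r; simpl; lra. Qed.

Lemma sumR_swap (f : nat -> nat -> R) (n m : nat) :
  sumR (fun i => sumR (fun j => f i j) m) n = sumR (fun j => sumR (fun i => f i j) n) m.
Proof.
  induction n; simpl.
  - symmetry; apply sumR_const0.
  - rewrite IHn, <- sumR_plus. reflexivity.
Qed.

Lemma sumR_le (f g : nat -> R) (n : nat) :
  (forall i, (i < n)%nat -> f i <= g i) -> sumR f n <= sumR g n.
Proof.
  induction n as [|n IH]; intros Hfg; simpl; [lra|].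
  pose proof (Hfg n (Nat.lt_succ_diag_r n)).
  assert (sumR f n <= sumR g n) by (apply IH; auto with arith). lra.
Qed.

Lemma sumR_nonneg (f : nat -> R) (n : nat) :
  (forall i, (i < n)%nat -> 0 <= f i) -> 0 <= sumR f n.
Proof. intros Hf. rewrite <- (sumR_const0 n). now apply sumR_le. Qed.

Lemma sumR_zero_tail (f : nat -> R) (n m : nat) :
  (n <= m)%nat -> (forall i, (n <= i)%nat -> f i = 0) -> sumR f m = sumR f n.
Proof. intros Hle Hf. induction Hle; simpl; auto. rewrite IHHle, Hf by lia. lra. Qed.

Lemma sumR_sum_f_R0 (f : nat -> R) (n : nat) : sumR f (S n) = sum_f_R0 f n.
Proof. induction n; simpl in *; [lra | now rewrite <- IHn]. Qed.

Lemma sumR_sum_n (f : nat -> R) (n : nat) : sumR f (S n) = sum_n f n.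
Proof. now rewrite sum_n_Reals, sumR_sum_f_R0. Qed.

Lemma is_lim_seq_partial_sums (a : nat -> R) (l : R) :
  is_series a l -> is_lim_seq (fun N => sumR a (S N)) l.
Proof.
  intros Ha. apply (is_lim_seq_ext (sum_n a)); [intros; symmetry; apply sumR_sum_n | exact Ha].
Qed.

Lemma is_series_partial_sums (a : nat -> R) (l : R) :
  is_lim_seq (fun N => sumR a (S N)) l -> is_series a l.
Proof.
  intros Ha. apply (is_lim_seq_ext _ (sum_n a)) in Ha; [exact Ha | intros; apply sumR_sum_n].
Qed.

Lemma is_series_const0 : is_series (fun _ : nat => 0) 0.
Proof.
  apply is_series_partial_sums, (is_lim_seq_ext (fun _ => 0)); [|apply is_lim_seq_const].
  intros. symmetry. apply sumR_const0.
Qed.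

Lemma series_tail_le (u v : nat -> R) (lu lv : R) (N : nat) :
  is_series u lu -> is_series v lv -> (forall i, (N <= i)%nat -> u i <= v i) ->
  lu - sumR u N <= lv - sumR v N.
Proof.
  intros Hu Hv Huv.
  assert (Htail : forall (a : nat -> R) l, is_series a l ->
            is_lim_seq (fun K => sumR (fun i => a (N + i)%nat) (S K)) (l - sumR a N)).
  { intros a l Ha. apply is_lim_seq_partial_sums, (is_lim_seq_incr_n _ N) in Ha.
    apply (is_lim_seq_ext (fun K => sumR a (S (K + N)) - sumR a N)).
    - intros K. replace (S (K + N)) with (N + S K)%nat by lia. rewrite sumR_add. ring.
    - apply is_lim_seq_minus'; [exact Ha | apply is_lim_seq_const]. }
  exact (is_lim_seq_le _ _ _ _ (fun K => sumR_le _ _ _ (fun i _ => Huv (N + i)%nat ltac:(lia)))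
           (Htail u lu Hu) (Htail v lv Hv)).
Qed.

Lemma sumR_le_series (a : nat -> R) (l : R) N :
  (forall i, 0 <= a i) -> is_series a l -> sumR a N <= l.
Proof.
  intros Ha Hl.
  pose proof (series_tail_le _ _ _ _ N is_series_const0 Hl (fun i _ => Ha i)) as H.
  rewrite sumR_const0 in H. lra.
Qed.

Definition lsum {A} (l : list A) (g : A -> R) : R := fold_right Rplus 0 (map g l).

Lemma lsum_app {A} (l1 l2 : list A) g : lsum (l1 ++ l2) g = lsum l1 g + lsum l2 g.
Proof. unfold lsum. induction l1; simpl; lra. Qed.

Lemma lsum_flat_map {A B} (l : list A) (h : A -> list B) g :
  lsum (flat_map h l) g = lsum l (fun a => lsum (h a) g).
Proof.
  induction l; simpl; [reflexivity|].
  rewrite lsum_app. unfold lsum in *; simpl. now rewrite <- IHl.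
Qed.

Lemma lsum_map {A B} (l : list A) (h : A -> B) g :
  lsum (map h l) g = lsum l (fun a => g (h a)).
Proof. unfold lsum. now rewrite map_map. Qed.

Lemma lsum_seq (f : nat -> R) n : lsum (seq 0 n) f = sumR f n.
Proof. induction n; [reflexivity|]. rewrite seq_S, lsum_app, IHn. unfold lsum; simpl. lra. Qed.

Lemma lsum_ext_in {A} (l : list A) g h :
  (forall a, In a l -> g a = h a) -> lsum l g = lsum l h.
Proof. intros Hgh. unfold lsum. f_equal. now apply map_ext_in. Qed.

Lemma lsum_scal {A} (l : list A) c g : lsum l (fun a => c * g a) = c * lsum l g.
Proof. unfold lsum. induction l; simpl; [ring | rewrite IHl; ring]. Qed.

Lemma lsum_const0 {A} (l : list A) : lsum l (fun _ => 0) = 0.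
Proof. unfold lsum. induction l; simpl; lra. Qed.

(** * Binomial identities *)

Lemma INR_fact_S n : INR (fact (S n)) = INR (S n) * INR (fact n).
Proof. apply mult_INR. Qed.

Lemma sum_binomial_fact (m : nat) (a : R) :
  sumR (fun y => a ^ (m - y) / (INR (fact y) * INR (fact (m - y)))) (S m)
  = (1 + a) ^ m / INR (fact m).
Proof.
  rewrite binomial, <- sumR_sum_f_R0. unfold Rdiv at 2. rewrite Rmult_comm, <- sumR_scal.
  apply sumR_ext. intros i Hi. unfold Binomial.C. rewrite pow1.
  pose proof (INR_fact_neq_0 m). pose proof (INR_fact_neq_0 i).
  pose proof (INR_fact_neq_0 (m - i)). field. auto.
Qed.

Lemma sum_index_binomial_fact (m : nat) (a : R) :
  sumR (fun y => INR y * a ^ (S m - y) / (INR (fact y) * INR (fact (S m - y)))) (S (S m))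
  = (1 + a) ^ m / INR (fact m).
Proof.
  rewrite sumR_shift, <- sum_binomial_fact. simpl INR at 1. rewrite Rmult_0_l, Rdiv_0_l, Rplus_0_l.
  apply sumR_ext. intros i Hi.
  replace (S m - S i)%nat with (m - i)%nat by lia. rewrite INR_fact_S.
  pose proof (INR_fact_neq_0 (m - i)). pose proof (INR_fact_neq_0 i).
  assert (INR (S i) <> 0) by (apply not_0_INR; lia). field. auto.
Qed.

Lemma sum_pred_binomial_fact (m : nat) (a : R) :
  sumR (fun y => (INR y - 1) * a ^ (S m - y) / (INR (fact y) * INR (fact (S m - y)))) (S (S m))
  = (1 + a) ^ m / INR (fact m) - (1 + a) ^ S m / INR (fact (S m)).
Proof.
  rewrite <- sum_index_binomial_fact, <- sum_binomial_fact, <- sumR_minus.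
  apply sumR_ext. intros i _. unfold Rdiv. ring.
Qed.

Lemma sum_pred_binomial_fact_diag n :
  sumR (fun k => (INR k + 1) * INR (S n) ^ (n - k)
                 / (INR (fact (S (S k))) * INR (fact (n - k)))) (S n)
  = INR (S n) ^ S (S n) / INR (fact (S (S n))).
Proof.
  pose proof (sum_pred_binomial_fact (S n) (INR (S n))) as Hsum.
  replace (1 + INR (S n)) with (INR (S (S n))) in Hsum by (rewrite (S_INR (S n)); ring).
  assert (Hcancel : INR (S (S n)) ^ S n / INR (fact (S n))
                    - INR (S (S n)) ^ S (S n) / INR (fact (S (S n))) = 0).
  { rewrite (INR_fact_S (S n)), <- (tech_pow_Rmult _ (S n)).
    assert (INR (S (S n)) <> 0) by (apply not_0_INR; lia).
    pose proof (INR_fact_neq_0 (S n)). field. auto. }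
  rewrite Hcancel, 2!sumR_shift, Nat.sub_0_r in Hsum.
  change (fact 0) with 1%nat in Hsum. change (fact 1) with 1%nat in Hsum.
  change (INR 0) with 0 in Hsum. change (INR 1) with 1 in Hsum.
  rewrite Rminus_diag, Rmult_0_l, Rdiv_0_l in Hsum.
  rewrite (sumR_ext _ (fun k => (INR (S (S k)) - 1) * INR (S n) ^ (S (S n) - S (S k))
                        / (INR (fact (S (S k))) * INR (fact (S (S n) - S (S k)))))).
  2: { intros k _. replace (S (S n) - S (S k))%nat with (n - k)%nat by lia.
       rewrite !S_INR. field. split; apply INR_fact_neq_0. }
  unfold Rdiv in *. rewrite Rmult_1_l in Hsum. lra.
Qed.

(** * Hitting times of the walk *)

Lemma poisson_0 lam : poisson lam 0 = exp (- lam).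
Proof. unfold poisson. simpl. field. Qed.

Lemma poisson_nonneg lam y : 0 <= lam -> 0 <= poisson lam y.
Proof.
  intros H. unfold poisson. apply Rmult_le_pos; [|left; apply exp_pos].
  apply Rdiv_le_0_compat; [apply pow_le; auto | apply INR_fact_lt_0].
Qed.

Lemma exp_opp_S_mult lam n : exp (- INR (S n) * lam) = exp (- lam) * exp (- INR n * lam).
Proof. rewrite <- exp_plus, S_INR. f_equal. ring. Qed.

(* Kemperman's hitting-time formula: the probability that the walk
   c, c + Y_1 - 1, c + Y_1 + Y_2 - 2, ... first reaches 0 at step n. *)
Definition borel_tanner (lam : R) (c n : nat) : R :=
  match c with
  | O => if Nat.eqb n 0 then 1 else 0
  | S _ => if Nat.ltb n c then 0 else
      INR c / INR n * (INR n * lam) ^ (n - c) / INR (fact (n - c)) * exp (- INR n * lam)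
  end.

Lemma borel_tanner_lt lam c n : (n < c)%nat -> borel_tanner lam c n = 0.
Proof. intros H. destruct c; [lia|]. simpl. destruct (Nat.ltb_spec n (S c)); [reflexivity|lia]. Qed.

Lemma borel_tanner_0_S lam n : borel_tanner lam 0 (S n) = 0.
Proof. reflexivity. Qed.

Lemma borel_tanner_pos lam c n : (1 <= c <= n)%nat ->
  borel_tanner lam c n =
  INR c / INR n * (INR n * lam) ^ (n - c) / INR (fact (n - c)) * exp (- INR n * lam).
Proof. intros H. destruct c; [lia|]. simpl. destruct (Nat.ltb_spec n (S c)); [lia|reflexivity]. Qed.

Lemma borel_tanner_diag lam c : borel_tanner lam c c = exp (- INR c * lam).
Proof.
  destruct c as [|c].
  - simpl. rewrite Ropp_0, Rmult_0_l, exp_0. reflexivity.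
  - rewrite borel_tanner_pos, Nat.sub_diag by lia.
    assert (INR (S c) <> 0) by (apply not_0_INR; lia). simpl. field. auto.
Qed.

Lemma poisson_mul_borel_tanner lam c m y : (1 <= m)%nat -> (y <= m)%nat ->
  poisson lam y * borel_tanner lam (c + y) (c + m)
  = exp (- lam) * exp (- INR (c + m) * lam) * lam ^ m / INR (c + m)
    * ((INR c + INR y) * INR (c + m) ^ (m - y) / (INR (fact y) * INR (fact (m - y)))).
Proof.
  intros Hm Hy. set (N := INR (c + m)).
  assert (HN : N <> 0) by (apply not_0_INR; lia).
  pose proof (INR_fact_neq_0 y). pose proof (INR_fact_neq_0 (m - y)).
  destruct (Nat.eq_dec (c + y) 0) as [Hc0|Hc0].
  - assert (c = 0%nat /\ y = 0%nat) as [-> ->] by lia.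
    destruct m; [lia|]. rewrite !Nat.add_0_l, borel_tanner_0_S. simpl INR. field. auto.
  - rewrite borel_tanner_pos by lia. replace (c + m - (c + y))%nat with (m - y)%nat by lia.
    unfold poisson. fold N. rewrite plus_INR, Rpow_mult_distr.
    replace (lam ^ m) with (lam ^ y * lam ^ (m - y)) by (rewrite <- pow_add; f_equal; lia).
    field. auto.
Qed.

Lemma borel_tanner_step_interior lam c m :
  borel_tanner lam (S c) (S (c + S m))
  = sumR (fun y => poisson lam y * borel_tanner lam (c + y) (c + S m)) (S (S m)).
Proof.
  rewrite (sumR_ext _ _ _ (fun y (Hy : (y < S (S m))%nat) =>
    poisson_mul_borel_tanner lam c (S m) y ltac:(lia) ltac:(lia))).
  rewrite sumR_scal.
  set (N := INR (c + S m)).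
  rewrite (sumR_ext _ (fun y => INR c * (N ^ (S m - y) / (INR (fact y) * INR (fact (S m - y))))
                                + INR y * N ^ (S m - y) / (INR (fact y) * INR (fact (S m - y)))))
    by (intros; unfold Rdiv; ring).
  (* With N = c + m + 1, the two binomial sums combine via c (N + 1) + (m + 1) = (c + 1) N. *)
  rewrite sumR_plus, sumR_scal, sum_binomial_fact, sum_index_binomial_fact.
  rewrite borel_tanner_pos by lia. replace (S (c + S m) - S c)%nat with (S m) by lia.
  rewrite exp_opp_S_mult, INR_fact_S. fold N.
  assert (EN : INR (S (c + S m)) = 1 + N) by (unfold N; rewrite S_INR; ring).
  assert (EN' : N = INR c + INR m + 1) by (unfold N; rewrite plus_INR, S_INR; ring).
  rewrite EN, Rpow_mult_distr, <- !tech_pow_Rmult.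
  pose proof (INR_fact_neq_0 m). pose proof (pos_INR m). pose proof (pos_INR c).
  rewrite !S_INR, EN'. field. repeat split; lra.
Qed.

Lemma borel_tanner_first_step lam c n :
  borel_tanner lam (S c) (S n)
  = sumR (fun y => poisson lam y * borel_tanner lam (c + y) n) (S n).
Proof.
  destruct (le_lt_dec c n) as [Hcn | Hnc].
  - replace n with (c + (n - c))%nat by lia. generalize (n - c)%nat as d. intros d.
    rewrite (sumR_zero_tail _ (S d))
      by (lia || (intros; rewrite borel_tanner_lt by lia; ring)).
    destruct d as [|m].
    + rewrite Nat.add_0_r. simpl sumR. rewrite Nat.add_0_r, !borel_tanner_diag, exp_opp_S_mult.
      rewrite poisson_0. ring.
    + apply borel_tanner_step_interior.
  - rewrite borel_tanner_lt by lia.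
    rewrite (sumR_ext _ (fun _ => 0)), sumR_const0; [reflexivity|].
    intros y _. rewrite borel_tanner_lt by lia. ring.
Qed.

Fixpoint first_hit (c : nat) (ys : list nat) : bool :=
  match ys with
  | [] => Nat.eqb c 0
  | y :: ys' => negb (Nat.eqb c 0) && first_hit (c + y - 1) ys'
  end.

Lemma box_S n M : box (S n) M = flat_map (fun y => map (cons y) (box n M)) (seq 0 (S M)).
Proof. reflexivity. Qed.

Lemma box_length n M ys : In ys (box n M) -> length ys = n.
Proof.
  revert ys; induction n; intros ys H.
  - destruct H as [<-|[]]; reflexivity.
  - rewrite box_S in H. apply in_flat_map in H as [y [_ H]].
    apply in_map_iff in H as [zs [<- H]]. simpl. f_equal. auto.
Qed.

Lemma lsum_box_first_hit lam n : forall c M, (n <= M)%nat ->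
  lsum (box n M) (fun ys => if first_hit c ys then weight lam ys else 0)
  = borel_tanner lam c n.
Proof.
  induction n as [|n IH]; intros c M HM.
  - unfold lsum. simpl. destruct c; simpl; lra.
  - rewrite box_S, lsum_flat_map, lsum_seq.
    destruct c as [|c].
    + rewrite borel_tanner_0_S, (sumR_ext _ (fun _ => 0)), sumR_const0; [reflexivity|].
      intros y _. rewrite lsum_map. apply lsum_const0.
    + rewrite borel_tanner_first_step, <- (sumR_zero_tail _ (S n) (S M))
        by (lia || (intros; rewrite borel_tanner_lt by lia; ring)).
      apply sumR_ext. intros y Hy.
      rewrite lsum_map, <- (IH (c + y)%nat M), <- lsum_scal by lia.
      apply lsum_ext_in. intros ys _. simpl. rewrite Nat.sub_0_r.
      destruct (first_hit (c + y) ys); ring.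
Qed.

Lemma psum_S z y ys : psum (S z) (y :: ys) = (y + psum z ys)%nat.
Proof. reflexivity. Qed.

Lemma psum_le_S z ys : (psum z ys <= psum (S z) ys)%nat.
Proof.
  revert ys; induction z as [|z IHz]; intros [|y ys]; try (unfold psum; simpl; lia).
  rewrite !psum_S. specialize (IHz ys). lia.
Qed.

Lemma first_hit_spec c ys :
  first_hit c ys = true <->
  (forall z, (z < length ys)%nat -> (z < c + psum z ys)%nat)
  /\ (c + psum (length ys) ys = length ys)%nat.
Proof.
  revert c; induction ys as [|y ys IH]; intros c; simpl.
  - rewrite Nat.eqb_eq. unfold psum; simpl. split; [intros; split; lia | lia].
  - rewrite andb_true_iff, negb_true_iff, Nat.eqb_neq, IH, psum_S.
    split.
    + intros [Hc [Hlt Hend]]. split; [|lia].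
      intros [|z] Hz; [simpl; lia|]. rewrite psum_S. specialize (Hlt z ltac:(lia)). lia.
    + intros [Hlt Hend].
      assert (Hc : (0 < c)%nat)
        by (specialize (Hlt 0%nat ltac:(lia)); unfold psum in Hlt; simpl in Hlt; lia).
      split; [lia|]. split; [|lia].
      intros z Hz. specialize (Hlt (S z) ltac:(lia)). rewrite psum_S in Hlt. lia.
Qed.

Lemma Xeqb_S_cons x y ys : length ys = x ->
  Xeqb (S x) (y :: ys) = negb (Nat.eqb y 0) && first_hit (y - 1) ys.
Proof.
  intros Hl. apply eq_true_iff_eq. unfold Xeqb.
  rewrite !andb_true_iff, first_hit_spec, Hl, forallb_forall, Nat.leb_le, psum_S.
  simpl nth. replace (S x - 1)%nat with x by lia. rewrite negb_true_iff, Nat.eqb_neq.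
  split.
  - intros [[Hy Hle] Hall].
    assert (Hz : forall z, (z < x)%nat -> (S z < y + psum z ys)%nat).
    { intros z Hz. specialize (Hall (S z) ltac:(rewrite in_seq; lia)).
      apply Nat.ltb_lt in Hall. now rewrite psum_S in Hall. }
    split; [exact Hy|]. split; [intros z Hz'; specialize (Hz z Hz'); lia|].
    destruct x as [|x]; [simpl in *; lia|].
    specialize (Hz x ltac:(lia)). pose proof (psum_le_S x ys). lia.
  - intros [Hy [Hlt Hend]]. split; [split; [exact Hy | lia]|].
    intros z Hz. rewrite in_seq in Hz. apply Nat.ltb_lt.
    destruct z as [|z]; [lia|]. rewrite psum_S. specialize (Hlt z ltac:(lia)). lia.
Qed.

Lemma trunc_prob_0 lam M : trunc_prob lam 0 M = exp (- lam).
Proof.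
  change (trunc_prob lam 0 M)
    with (lsum (box 1 M) (fun ys => if Xeqb 0 ys then weight lam ys else 0)).
  rewrite box_S, lsum_flat_map, lsum_seq, sumR_shift.
  rewrite (sumR_ext _ (fun _ => 0)), sumR_const0 by (intros; unfold lsum; simpl; ring).
  unfold lsum. simpl. rewrite poisson_0. ring.
Qed.

Lemma trunc_prob_S lam x M : (S x <= M)%nat ->
  trunc_prob lam (S x) M
  = sumR (fun k => poisson lam (S k) * borel_tanner lam k x) (S x).
Proof.
  intros HM. unfold trunc_prob. replace (Nat.max (S x) 1) with (S x) by lia.
  change (fold_right _ _ _)
    with (lsum (box (S x) M) (fun ys => if Xeqb (S x) ys then weight lam ys else 0)).
  rewrite box_S, lsum_flat_map, lsum_seq, sumR_shift.
  rewrite (lsum_map _ _ _), (lsum_ext_in _ _ (fun _ => 0)), lsum_const0, Rplus_0_l.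
  2: { intros ys Hin. rewrite Xeqb_S_cons by (eapply box_length; eauto). reflexivity. }
  rewrite <- (sumR_zero_tail _ (S x) M)
    by (lia || (intros; rewrite borel_tanner_lt by lia; ring)).
  apply sumR_ext. intros y _.
  rewrite lsum_map, <- (lsum_box_first_hit lam x y M), <- lsum_scal by lia.
  apply lsum_ext_in. intros ys Hin.
  rewrite Xeqb_S_cons by (eapply box_length; eauto). simpl. rewrite Nat.sub_0_r.
  destruct (first_hit y ys); simpl; ring.
Qed.

Lemma pX_first_step lam x :
  pX lam (S x) = sumR (fun k => poisson lam (S k) * borel_tanner lam k x) (S x).
Proof.
  destruct x as [|n].
  - unfold pX, poisson. simpl. field.
  - rewrite sumR_shift, borel_tanner_0_S, Rmult_0_r, Rplus_0_l.
    set (K := lam ^ S (S n) * exp (- lam) * exp (- INR (S n) * lam) / INR (S n)).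
    assert (HSn : INR (S n) <> 0) by (apply not_0_INR; lia).
    rewrite (sumR_ext _ (fun k => K * ((INR k + 1) * INR (S n) ^ (n - k)
                                        / (INR (fact (S (S k))) * INR (fact (n - k)))))).
    2: { intros k Hk. rewrite borel_tanner_pos by lia.
         replace (S n - S k)%nat with (n - k)%nat by lia.
         unfold poisson, K. rewrite Rpow_mult_distr.
         replace (lam ^ S (S n)) with (lam ^ S (S k) * lam ^ (n - k))
           by (rewrite <- pow_add; f_equal; lia).
         pose proof (INR_fact_neq_0 (S (S k))). pose proof (INR_fact_neq_0 (n - k)).
         rewrite (S_INR k). field. auto. }
    rewrite sumR_scal, sum_pred_binomial_fact_diag. unfold K, pX.
    replace (S (S n) - 1)%nat with (S n) by lia. replace (S (S n) - 2)%nat with n by lia.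
    rewrite (exp_opp_S_mult lam (S n)), (INR_fact_S (S n)), (INR_fact_S n), <- !tech_pow_Rmult.
    pose proof (INR_fact_neq_0 n).
    assert (INR (S (S n)) <> 0) by (apply not_0_INR; lia).
    field. auto.
Qed.

Lemma trunc_prob_eq_pX lam x M : (x <= M)%nat -> trunc_prob lam x M = pX lam x.
Proof.
  intros HM. destruct x as [|x].
  - apply trunc_prob_0.
  - rewrite trunc_prob_S, pX_first_step by lia. reflexivity.
Qed.

Lemma Un_cv_trunc_prob lam x : Un_cv (fun M => trunc_prob lam x M) (pX lam x).
Proof.
  apply is_lim_seq_Reals, (is_lim_seq_ext_loc (fun _ => pX lam x)); [|apply is_lim_seq_const].
  exists x. intros M HM. symmetry. apply trunc_prob_eq_pX. exact HM.
Qed.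

(** * Almost sure finiteness of X *)

Lemma is_series_poisson_pow lam t :
  is_series (fun y => poisson lam y * t ^ y) (exp (lam * (t - 1))).
Proof.
  pose proof (proj1 (is_pseries_R _ _ _) (is_exp_Reals (lam * t))) as Hexp.
  apply (is_series_scal_r (exp (- lam))) in Hexp.
  replace (exp (lam * (t - 1))) with (exp (lam * t) * exp (- lam))
    by (rewrite <- exp_plus; f_equal; ring).
  eapply is_series_ext; [|exact Hexp]. intros y. simpl.
  unfold poisson. rewrite Rpow_mult_distr. field. apply INR_fact_neq_0.
Qed.

Lemma is_series_poisson lam : is_series (poisson lam) 1.
Proof.
  replace 1 with (exp (lam * (1 - 1))) by (rewrite Rminus_diag, Rmult_0_r; apply exp_0).
  eapply is_series_ext; [|apply is_series_poisson_pow]. intros y. simpl. rewrite pow1. ring.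
Qed.

(* Any base θ > 1 with E θ^Y = e^{λ(θ-1)} < θ would do; θ = 2 - λ works on [0, 1). *)
Definition tilt (lam : R) : R := 2 - lam.
Definition tilt_mgf (lam : R) : R := exp (lam * (tilt lam - 1)).
Definition decay (lam : R) : R := tilt_mgf lam / tilt lam.

Lemma tilt_ge_1 lam : lam <= 1 -> 1 <= tilt lam.
Proof. unfold tilt. lra. Qed.

Lemma tilt_mgf_ge_1 lam : 0 <= lam <= 1 -> 1 <= tilt_mgf lam.
Proof.
  intros H. unfold tilt_mgf, tilt. pose proof (exp_ineq1_le (lam * (2 - lam - 1))). nra.
Qed.

Lemma decay_pos lam : lam < 1 -> 0 < decay lam.
Proof. intros. unfold decay, tilt. apply Rdiv_lt_0_compat; [apply exp_pos | lra]. Qed.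

Lemma decay_lt_1 lam : 0 <= lam < 1 -> decay lam < 1.
Proof.
  intros H. unfold decay, tilt_mgf, tilt.
  set (a := lam * (2 - lam - 1)).
  assert (Hexp : exp a * (1 - a) <= 1).
  { pose proof (exp_ineq1_le (- a)). rewrite exp_Ropp in *. pose proof (exp_pos a).
    apply (Rmult_le_reg_r (/ exp a)); [apply Rinv_0_lt_compat; lra|].
    replace (exp a * (1 - a) * / exp a) with (1 - a) by (field; lra). lra. }
  assert (Hcube : (2 - lam) * (1 - a) - 1 = (1 - lam) ^ 3) by (unfold a; ring).
  assert (0 < (1 - lam) ^ 3) by (apply pow_lt; lra).
  assert (a < 1) by (unfold a; pose proof (pow2_ge_0 (lam - 1 / 2)); nra).
  apply Rlt_div_l; [lra|]. rewrite Rmult_1_l.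
  apply (Rmult_lt_reg_r (1 - a)); lra.
Qed.

Lemma tilt_mul_decay lam : lam < 1 -> tilt lam * decay lam = tilt_mgf lam.
Proof. intros. unfold decay, tilt. field. lra. Qed.

Definition survival (lam : R) (N c : nat) : R := 1 - sumR (borel_tanner lam c) (S N).

Lemma survival_0 lam N : survival lam N 0 = 0.
Proof.
  unfold survival. rewrite sumR_shift, (sumR_ext _ (fun _ => 0)), sumR_const0 by reflexivity.
  simpl. ring.
Qed.

Lemma survival_O_S lam c : survival lam 0 (S c) = 1.
Proof. unfold survival. cbn [sumR]. rewrite borel_tanner_lt by lia. ring. Qed.

Lemma survival_S_S lam N c :
  survival lam (S N) (S c)
  = (1 - sumR (poisson lam) (S N))
    + sumR (fun y => poisson lam y * survival lam N (c + y)) (S N).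
Proof.
  unfold survival. rewrite sumR_shift, borel_tanner_lt, Rplus_0_l by lia.
  rewrite (sumR_ext _ (fun n => sumR (fun y => poisson lam y * borel_tanner lam (c + y) n) (S N))).
  2: { intros n Hn. rewrite borel_tanner_first_step.
       symmetry; apply sumR_zero_tail; [lia|]. intros y Hy. rewrite borel_tanner_lt by lia. ring. }
  rewrite sumR_swap, (sumR_ext _ (fun y => poisson lam y
                                   - poisson lam y * (1 - sumR (borel_tanner lam (c + y)) (S N))))
    by (intros; rewrite sumR_scal; ring).
  rewrite sumR_minus. ring.
Qed.

Section SurvivalBounds.

Variable lam : R.
Hypothesis Hlam : 0 <= lam < 1.

Lemma poisson_partial_le_1 N : sumR (poisson lam) N <= 1.
Proof.
  apply sumR_le_series; [intros; apply poisson_nonneg; lra | apply is_series_poisson].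
Qed.

Lemma survival_nonneg N c : 0 <= survival lam N c.
Proof.
  revert c; induction N as [|N IH]; intros [|c].
  - rewrite survival_0. lra.
  - rewrite survival_O_S. lra.
  - rewrite survival_0. lra.
  - rewrite survival_S_S. pose proof (poisson_partial_le_1 (S N)).
    assert (0 <= sumR (fun y => poisson lam y * survival lam N (c + y)) (S N)).
    { apply sumR_nonneg. intros y _. apply Rmult_le_pos; [apply poisson_nonneg; lra | apply IH]. }
    lra.
Qed.

(* Markov's inequality on the tail {Y > N} of E tilt^Y. *)
Lemma poisson_tail_le N :
  tilt lam ^ S N * (1 - sumR (poisson lam) (S N))
  <= tilt_mgf lam - sumR (fun y => poisson lam y * tilt lam ^ y) (S N).
Proof.
  pose proof (tilt_ge_1 lam ltac:(lra)) as Ht.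
  assert (Hu : is_series (fun y => tilt lam ^ S N * poisson lam y) (tilt lam ^ S N * 1)).
  { exact (is_series_scal_l _ _ _ (is_series_poisson lam)). }
  pose proof (series_tail_le _ _ _ _ (S N) Hu (is_series_poisson_pow lam (tilt lam))) as H.
  rewrite sumR_scal in H. unfold tilt_mgf. rewrite Rmult_minus_distr_l. apply H.
  intros y Hy. rewrite Rmult_comm. apply Rmult_le_compat_l; [apply poisson_nonneg; lra|].
  apply Rle_pow; [lra | lia].
Qed.

Lemma survival_le N c : survival lam N c <= tilt lam ^ c * decay lam ^ N.
Proof.
  pose proof (tilt_ge_1 lam ltac:(lra)) as Ht.
  pose proof (decay_pos lam ltac:(lra)) as Hr.
  revert c; induction N as [|N IH]; intros [|c].
  - rewrite survival_0. simpl. lra.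
  - rewrite survival_O_S, pow_O, Rmult_1_r. apply pow_R1_Rle. lra.
  - rewrite survival_0, pow_O, Rmult_1_l. left. apply pow_lt. lra.
  - rewrite survival_S_S.
    set (B := tilt lam ^ c * decay lam ^ N).
    set (EN := sumR (fun y => poisson lam y * tilt lam ^ y) (S N)).
    assert (HB : 0 <= B) by (apply Rmult_le_pos; apply pow_le; lra).
    assert (Hrec : sumR (fun y => poisson lam y * survival lam N (c + y)) (S N) <= B * EN).
    { unfold EN. rewrite <- sumR_scal. apply sumR_le. intros y _.
      replace (B * (poisson lam y * tilt lam ^ y))
        with (poisson lam y * (tilt lam ^ (c + y) * decay lam ^ N))
        by (unfold B; rewrite pow_add; ring).
      apply Rmult_le_compat_l; [apply poisson_nonneg; lra | apply IH]. }
    assert (Hscale : 1 <= B * tilt lam ^ S N).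
    { replace (B * tilt lam ^ S N) with (tilt lam ^ S c * tilt_mgf lam ^ N)
        by (unfold B; rewrite <- tilt_mul_decay, Rpow_mult_distr by lra; simpl; ring).
      rewrite <- (Rmult_1_l 1). apply Rmult_le_compat; try lra;
        apply pow_R1_Rle; [lra | apply tilt_mgf_ge_1; lra]. }
    pose proof (poisson_tail_le N) as Htail. fold EN in Htail.
    pose proof (poisson_partial_le_1 (S N)) as HP.
    assert (HT : 1 - sumR (poisson lam) (S N) <= B * (tilt_mgf lam - EN)).
    { apply Rle_trans with (B * tilt lam ^ S N * (1 - sumR (poisson lam) (S N))); [nra|].
      rewrite Rmult_assoc. apply Rmult_le_compat_l; assumption. }
    replace (tilt lam ^ S c * decay lam ^ S N) with (B * tilt_mgf lam)
      by (unfold B; rewrite <- tilt_mul_decay by lra; simpl; ring).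
    lra.
Qed.

End SurvivalBounds.

Lemma pX_deficit lam N :
  1 - sumR (pX lam) (S (S N))
  = (1 - sumR (poisson lam) (S (S N)))
    + sumR (fun k => poisson lam (S k) * survival lam N k) (S N).
Proof.
  rewrite (sumR_shift (pX lam)), (sumR_shift (poisson lam)), poisson_0.
  rewrite (sumR_ext _ (fun x => sumR (fun k => poisson lam (S k) * borel_tanner lam k x) (S N))).
  2: { intros x Hx. rewrite pX_first_step. symmetry. apply sumR_zero_tail; [lia|].
       intros k Hk. rewrite borel_tanner_lt by lia. ring. }
  rewrite sumR_swap.
  rewrite (sumR_ext (fun k => sumR (fun x => _) _)
             (fun k => poisson lam (S k) - poisson lam (S k) * survival lam N k))
    by (intros; unfold survival; rewrite sumR_scal; ring).
  simpl pX. rewrite sumR_minus. ring.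
Qed.

Lemma pX_deficit_bounds lam N : 0 <= lam < 1 ->
  0 <= 1 - sumR (pX lam) (S (S N))
    <= (1 - sumR (poisson lam) (S (S N))) + decay lam ^ N * tilt_mgf lam.
Proof.
  intros Hlam. rewrite pX_deficit.
  pose proof (poisson_partial_le_1 lam Hlam (S (S N))).
  pose proof (tilt_ge_1 lam ltac:(lra)) as Ht.
  assert (Hp : forall y, 0 <= poisson lam y) by (intros; apply poisson_nonneg; lra).
  split.
  - assert (0 <= sumR (fun k => poisson lam (S k) * survival lam N k) (S N)); [|lra].
    apply sumR_nonneg. intros k _. apply Rmult_le_pos; [apply Hp | apply survival_nonneg; lra].
  - assert (sumR (fun k => poisson lam (S k) * survival lam N k) (S N)
            <= decay lam ^ N * tilt_mgf lam); [|lra].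
    apply Rle_trans with (decay lam ^ N * sumR (fun y => poisson lam y * tilt lam ^ y) (S (S N))).
    + rewrite <- sumR_scal, (sumR_shift (fun y => decay lam ^ N * _)).
      apply Rle_trans
        with (0 + sumR (fun k => decay lam ^ N * (poisson lam (S k) * tilt lam ^ S k)) (S N)).
      * rewrite Rplus_0_l. apply sumR_le. intros k _.
        apply Rle_trans with (poisson lam (S k) * (tilt lam ^ k * decay lam ^ N)).
        -- apply Rmult_le_compat_l; [apply Hp | apply survival_le; lra].
        -- pose proof (pow_lt (decay lam) N (decay_pos lam ltac:(lra))).
           replace (decay lam ^ N * (poisson lam (S k) * tilt lam ^ S k))
             with (poisson lam (S k) * (tilt lam ^ S k * decay lam ^ N)) by ring.
           apply Rmult_le_compat_l; [apply Hp|].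
           apply Rmult_le_compat_r; [lra | apply Rle_pow; [lra | lia]].
      * apply Rplus_le_compat_r. pose proof (Hp 0%nat).
        pose proof (pow_lt (decay lam) N (decay_pos lam ltac:(lra))). simpl. nra.
    + apply Rmult_le_compat_l; [left; apply pow_lt, decay_pos; lra|].
      apply sumR_le_series; [|apply is_series_poisson_pow].
      intros y. apply Rmult_le_pos; [apply Hp | apply pow_le; lra].
Qed.

Lemma is_series_pX lam : 0 <= lam < 1 -> is_series (pX lam) 1.
Proof.
  intros Hlam. apply is_series_partial_sums, (is_lim_seq_incr_n _ 1).
  apply (is_lim_seq_le_le
           (fun N => 1 - ((1 - sumR (poisson lam) (S (S N))) + decay lam ^ N * tilt_mgf lam))
           _ (fun _ => 1)).
  - intros N. pose proof (pX_deficit_bounds lam N Hlam). rewrite Nat.add_1_r. lra.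
  - replace (Finite 1) with (Finite (1 - ((1 - 1) + 0 * tilt_mgf lam))) by (f_equal; ring).
    apply is_lim_seq_minus'; [apply is_lim_seq_const|].
    apply is_lim_seq_plus'.
    + apply is_lim_seq_minus'; [apply is_lim_seq_const|].
      apply (is_lim_seq_ext (fun N => sumR (poisson lam) (S (N + 1))));
        [intros; now rewrite Nat.add_1_r|].
      apply (is_lim_seq_incr_n (fun N => sumR (poisson lam) (S N)) 1).
      apply is_lim_seq_partial_sums, is_series_poisson.
    + apply (is_lim_seq_scal_r (fun N => decay lam ^ N) (tilt_mgf lam) 0).
      apply is_lim_seq_geom. rewrite Rabs_pos_eq by (left; apply decay_pos; lra).
      apply decay_lt_1; lra.
  - apply is_lim_seq_const.
Qed.

(** * Generating function and moments *)

Definition pX_coef (x : nat) : R :=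
  match x with
  | O => 0
  | S O => 1
  | S (S n) => INR (S n) ^ n / (INR (S (S n)) * INR (fact n))
  end.

Definition mul_exp_opp (lam : R) : R := lam * exp (- lam).

Lemma pX_coef_nonneg x : 0 <= pX_coef x.
Proof.
  destruct x as [|[|n]]; cbn [pX_coef]; try lra.
  apply Rdiv_le_0_compat; [apply pow_le, pos_INR|].
  apply Rmult_lt_0_compat; [apply lt_0_INR; lia | apply INR_fact_lt_0].
Qed.

Lemma exp_opp_INR_mult lam n : exp (- INR n * lam) = exp (- lam) ^ n.
Proof.
  induction n as [|n IH].
  - simpl. rewrite Ropp_0, Rmult_0_l, exp_0. reflexivity.
  - rewrite exp_opp_S_mult, IH. reflexivity.
Qed.

Lemma pX_eq_coef lam x : (1 <= x)%nat -> pX lam x = pX_coef x * mul_exp_opp lam ^ x.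
Proof.
  intros Hx. unfold mul_exp_opp. rewrite Rpow_mult_distr.
  destruct x as [|[|n]]; [lia | simpl; ring|].
  unfold pX, pX_coef. replace (S (S n) - 1)%nat with (S n) by lia.
  replace (S (S n) - 2)%nat with n by lia. rewrite exp_opp_INR_mult. ring.
Qed.

Lemma is_pseries_pX_coef lam : 0 <= lam < 1 ->
  is_pseries pX_coef (mul_exp_opp lam) (1 - exp (- lam)).
Proof.
  intros Hlam. apply is_pseries_R, is_series_decr_1.
  apply (is_series_ext (fun k => pX lam (S k))); [intros; apply pX_eq_coef; lia|].
  apply is_series_incr_1.
  match goal with |- is_series _ ?l => replace l with 1 end.
  2: { unfold plus, opp. simpl. ring. }
  apply is_series_pX; assumption.
Qed.

Lemma mul_exp_opp_nonneg lam : 0 <= lam -> 0 <= mul_exp_opp lam.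
Proof. intros. unfold mul_exp_opp. pose proof (exp_pos (- lam)). nra. Qed.

Lemma mul_exp_opp_lt lam mu : 0 <= lam < mu -> mu <= 1 -> mul_exp_opp lam < mul_exp_opp mu.
Proof.
  intros H Hmu. unfold mul_exp_opp. set (d := mu - lam).
  replace (exp (- mu)) with (exp (- lam) * exp (- d))
    by (rewrite <- exp_plus; f_equal; unfold d; ring).
  pose proof (exp_ineq1 (- d) ltac:(unfold d; lra)). pose proof (exp_pos (- lam)).
  assert (lam < mu * exp (- d)).
  { apply Rle_lt_trans with (mu * (1 - d)); [unfold d; nra | apply Rmult_lt_compat_l; lra]. }
  nra.
Qed.

Lemma radius_pX_coef lam : 0 <= lam < 1 ->
  Rbar_lt (Rabs (mul_exp_opp lam)) (CV_radius pX_coef).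
Proof.
  intros Hlam. set (mu := (1 + lam) / 2).
  assert (Hdisk : CV_disk pX_coef (mul_exp_opp mu)).
  { exists (1 - exp (- mu)).
    apply (is_series_ext (fun n => pX_coef n * mul_exp_opp mu ^ n)).
    2: { apply (is_pseries_R pX_coef), is_pseries_pX_coef. unfold mu. lra. }
    intros n. symmetry. apply Rabs_pos_eq.
    apply Rmult_le_pos; [apply pX_coef_nonneg | apply pow_le, mul_exp_opp_nonneg; unfold mu; lra]. }
  apply Rbar_lt_le_trans with (mul_exp_opp mu).
  - rewrite Rabs_pos_eq by (apply mul_exp_opp_nonneg; lra).
    apply mul_exp_opp_lt; unfold mu; lra.
  - exact (proj1 (Lub_Rbar_correct (CV_disk pX_coef)) _ Hdisk).
Qed.

Lemma is_derive_mul_exp_opp lam : is_derive mul_exp_opp lam ((1 - lam) * exp (- lam)).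
Proof. unfold mul_exp_opp. auto_derive; [auto | ring]. Qed.

Lemma is_derive_comp_cancel (F g h : R -> R) (x dF dg dh : R) :
  is_derive F (g x) dF -> is_derive g x dg -> dg <> 0 ->
  locally x (fun y => F (g y) = h y) -> is_derive h x dh -> dF = dh / dg.
Proof.
  intros HF Hg Hdg Hloc Hh.
  pose proof (is_derive_ext_loc _ _ _ _ Hloc (is_derive_comp _ _ _ _ _ HF Hg)) as Hh'.
  apply is_derive_unique in Hh, Hh'. rewrite Hh in Hh'. rewrite Hh'. unfold scal. simpl.
  unfold mult. simpl. field. assumption.
Qed.

Lemma locally_open_unit_interval (P : R -> Prop) lam :
  0 < lam < 1 -> (forall mu, 0 < mu < 1 -> P mu) -> locally lam P.
Proof.
  intros Hlam HP. apply (locally_interval _ _ 0 1); simpl; try lra. intros mu H0 H1. now apply HP.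
Qed.

Lemma PSeries_derive_pX_coef lam : 0 < lam < 1 ->
  PSeries (PS_derive pX_coef) (mul_exp_opp lam) = 1 / (1 - lam).
Proof.
  intros Hlam. pose proof (exp_pos (- lam)).
  rewrite (is_derive_comp_cancel (PSeries pX_coef) mul_exp_opp (fun mu => 1 - exp (- mu))
             lam _ ((1 - lam) * exp (- lam)) (exp (- lam))).
  - field. lra.
  - apply is_derive_PSeries, radius_pX_coef. lra.
  - apply is_derive_mul_exp_opp.
  - apply Rmult_integral_contrapositive. lra.
  - apply locally_open_unit_interval; [assumption|]. intros mu Hmu.
    apply is_pseries_unique, is_pseries_pX_coef. lra.
  - auto_derive; [auto | ring].
Qed.

Lemma PSeries_derive2_pX_coef lam : 0 < lam < 1 ->
  PSeries (PS_derive (PS_derive pX_coef)) (mul_exp_opp lam) = 1 / ((1 - lam) ^ 3 * exp (- lam)).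
Proof.
  intros Hlam. pose proof (exp_pos (- lam)).
  rewrite (is_derive_comp_cancel (PSeries (PS_derive pX_coef)) mul_exp_opp (fun mu => 1 / (1 - mu))
             lam _ ((1 - lam) * exp (- lam)) (1 / (1 - lam) ^ 2)).
  - field. lra.
  - apply is_derive_PSeries. rewrite CV_radius_derive. apply radius_pX_coef. lra.
  - apply is_derive_mul_exp_opp.
  - apply Rmult_integral_contrapositive. lra.
  - apply locally_open_unit_interval; [assumption|]. intros mu Hmu.
    apply PSeries_derive_pX_coef. assumption.
  - auto_derive; [lra | field; lra].
Qed.

Lemma is_series_index_mul (a : nat -> R) (t l : R) :
  is_pseries (PS_derive a) t l -> is_series (fun n => INR n * (a n * t ^ n)) (t * l).
Proof.
  intros Hl. apply (is_pseries_R (PS_derive a)), (is_series_scal_r t) in Hl.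
  apply is_series_decr_1.
  match goal with
  | |- is_series _ ?s => replace s with (l * t) by (unfold plus, opp; simpl; ring)
  end.
  eapply is_series_ext; [|exact Hl]. intros n. unfold PS_derive. simpl. ring.
Qed.

Lemma is_series_index_mul2 (a : nat -> R) (t l : R) :
  is_pseries (PS_derive (PS_derive a)) t l ->
  is_series (fun n => INR n * (INR n - 1) * (a n * t ^ n)) (t ^ 2 * l).
Proof.
  intros Hl. apply (is_pseries_R (PS_derive (PS_derive a))), (is_series_scal_r (t ^ 2)) in Hl.
  apply is_series_decr_1, is_series_decr_1.
  match goal with
  | |- is_series _ ?s => replace s with (l * t ^ 2) by (unfold plus, opp; simpl; ring)
  end.
  eapply is_series_ext; [|exact Hl]. intros n. unfold PS_derive. rewrite !S_INR. simpl. ring.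
Qed.

Lemma INR_mul_pX lam n : INR n * pX lam n = INR n * (pX_coef n * mul_exp_opp lam ^ n).
Proof. destruct n as [|n]; [simpl; ring | now rewrite pX_eq_coef by lia]. Qed.

Lemma is_series_mean lam : 0 < lam < 1 ->
  is_series (fun x => INR x * pX lam x) (lam / (1 - lam) * exp (- lam)).
Proof.
  intros Hlam.
  assert (Hd : is_pseries (PS_derive pX_coef) (mul_exp_opp lam) (1 / (1 - lam))).
  { rewrite <- PSeries_derive_pX_coef by assumption. apply PSeries_correct, CV_radius_inside.
    rewrite CV_radius_derive. apply radius_pX_coef. lra. }
  replace (lam / (1 - lam) * exp (- lam)) with (mul_exp_opp lam * (1 / (1 - lam)))
    by (unfold mul_exp_opp; field; lra).
  eapply is_series_ext; [|apply (is_series_index_mul _ _ _ Hd)].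
  intros n. symmetry. apply INR_mul_pX.
Qed.

Lemma is_series_second_moment lam : 0 < lam < 1 ->
  is_series (fun x => INR x ^ 2 * pX lam x)
    ((1 - lam + lam ^ 2) / (1 - lam) ^ 2 * (lam / (1 - lam) * exp (- lam))).
Proof.
  intros Hlam.
  assert (Hd2 : is_pseries (PS_derive (PS_derive pX_coef)) (mul_exp_opp lam)
                  (1 / ((1 - lam) ^ 3 * exp (- lam)))).
  { rewrite <- PSeries_derive2_pX_coef by assumption. apply PSeries_correct, CV_radius_inside.
    rewrite !CV_radius_derive. apply radius_pX_coef. lra. }
  pose proof (is_series_plus _ _ _ _ (is_series_index_mul2 _ _ _ Hd2) (is_series_mean lam Hlam))
    as Hsum.
  match type of Hsum with is_series _ ?s =>
    replace s with ((1 - lam + lam ^ 2) / (1 - lam) ^ 2 * (lam / (1 - lam) * exp (- lam))) in Hsum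
  end.
  2: { pose proof (exp_pos (- lam)). unfold plus, mul_exp_opp. simpl. field. lra. }
  eapply is_series_ext; [|exact Hsum]. intros n. unfold plus. simpl.
  replace (INR n * (INR n * 1) * pX lam n) with (INR n * (INR n * pX lam n)) by ring.
  rewrite !INR_mul_pX. ring.
Qed.

(* [is_pseries_pX_coef] is only known for λ >= 0, so it cannot be differentiated at λ = 0;
   that case is computed directly. *)
Lemma is_series_pX_0_weighted (w : nat -> R) :
  w 0%nat = 0 -> is_series (fun x => w x * pX 0 x) 0.
Proof.
  intros Hw.
  assert (Hzero : forall x, w x * pX 0 x = 0).
  { intros [|x]; [rewrite Hw; ring|].
    rewrite pX_eq_coef by lia. unfold mul_exp_opp. rewrite Rmult_0_l, pow_i by lia. ring. }
  apply (is_series_ext (fun _ => 0)); [intros x; symmetry; apply Hzero | apply is_series_const0].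
Qed.

Theorem theorem2 (lam : R) (H0 : 0 <= lam) (H1 : lam < 1) :
  (forall x : nat, Un_cv (fun M => trunc_prob lam x M) (pX lam x)) /\
  infinite_sum (fun x => pX lam x) 1 /\
  infinite_sum (fun x => INR x * pX lam x) (lam / (1 - lam) * exp (- lam)) /\
  infinite_sum (fun x => INR x ^ 2 * pX lam x)
    ((1 - lam + lam ^ 2) / (1 - lam) ^ 2 * (lam / (1 - lam) * exp (- lam))).
Proof.
  split; [apply Un_cv_trunc_prob|].
  split; [apply is_series_Reals, is_series_pX; lra|].
  destruct (Req_dec lam 0) as [->|Hlam].
  - replace (0 / (1 - 0) * exp (- 0)) with 0 by field.
    rewrite Rmult_0_r.
    split; apply is_series_Reals, is_series_pX_0_weighted; simpl; ring.
  - split; apply is_series_Reals; [apply is_series_mean | apply is_series_second_moment]; lra.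
Qed.
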